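(* The schema $\langle[G\cup H]\rangle\varphi\rightarrow\langle[G]\rangle\langle[H]\rangle\varphi$ is not valid: with $A=\{a,b,c\}$, $G=\{a\}$, $H=\{b\}$, $P\supseteq\{p,q,r\}$ and $\varphi:=K_b(p\wedge q\wedge r)\wedge\neg K_a(p\wedge q\wedge r)\wedge\neg K_c(p\wedge q\wedge r)$, there is a pointed epistemic model $(M,w)$ with $(M,w)\models\langle[\{a,b\}]\rangle\varphi$ and $(M,w)\not\models\langle[\{a\}]\rangle\langle[\{b\}]\rangle\varphi$. (For instance, $W=\{pqr,pq\bar r,\bar pqr,p\bar qr\}$ with each state's name giving the truth values of $p,q,r$, $w=pqr$, $\sim_a$ identifying $pqr$ and $\bar pqr$, $\sim_b$ identifying $pqr$ and $p\bar qr$, $\sim_c$ identifying $pqr$, $pq\bar r$, $\bar pqr$, all relations reflexive otherwise.)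
   Context: Fix a finite set $A$ of agents and a countable set $P$ of propositional variables. The language $\mathcal{L}_{CoRGAL}$ is given by $\varphi ::= p \mid \neg\varphi \mid (\varphi\wedge\varphi) \mid K_a\varphi \mid [\varphi]\varphi \mid [G,\varphi]\varphi \mid [\langle G\rangle]\varphi$ with $p\in P$, $a\in A$, $G\subseteq A$. $\mathcal{L}_{EL}$ is the fragment built only from $p,\neg,\wedge,K_a$. Duals: $\langle\psi\rangle\varphi:=\neg[\psi]\neg\varphi$, $\langle[G]\rangle\varphi:=\neg[\langle G\rangle]\neg\varphi$. For $G\subseteq A$, $\mathcal{L}^G_{EL}$ is the set of formulas $\bigwedge_{i\in G}K_i\varphi_i$ with each $\varphi_i\in\mathcal{L}_{EL}$; $\psi_G,\chi_G$ range over $\mathcal{L}^G_{EL}$. Epistemic models $M=(W,\sim,V)$: $W\neq\emptyset$, each $\sim_a$ an equivalence relation, $V:P\to\mathcal{P}(W)$; $M^\varphi$ is the restriction of $M$ to $\{v:(M,v)\models\varphi\}$. Semantics: standard for $p,\neg,\wedge,K_a$; $(M,w)\models[\varphi]\psi$ iff $(M,w)\models\varphi$ implies $(M^\varphi,w)\models\psi$; $(M,w)\models[\langle G\rangle]\varphi$ iff for every $\psi_G$ there is $\chi_{A\setminus G}$ with $(M,w)\models\psi_G\to\langle\psi_G\wedge\chi_{A\setminus G}\rangle\varphi$. Thus $(M,w)\models\langle[G]\rangle\varphi$ iff there is $\psi_G$ such that for all $\chi_{A\setminus G}$, $(M,w)\models\psi_G\wedge[\psi_G\wedge\chi_{A\setminus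 G}]\varphi$. A formula is valid if true at every pointed model. *)

From Stdlib Require Import List Bool.
Import ListNotations.

Inductive agent : Type := ag_a | ag_b | ag_c.
Definition agents : list agent := [ag_a; ag_b; ag_c].

Definition coalition := agent -> bool.

Definition pvar_p : nat := 0.
Definition pvar_q : nat := 1.
Definition pvar_r : nat := 2.

Inductive elform : Type :=
| ELVar (p : nat)
| ELNeg (f : elform)
| ELAnd (f g : elform)
| ELK (i : agent) (f : elform).

(* The language (the [G,phi]psi constructor is omitted). *)
Inductive form : Type :=
| Var (p : nat)
| Neg (f : form)
| And (f g : form)
| K (i : agent) (f : form)
| Ann (f g : form)
| GA (G : coalition) (f : form).

Record model : Type := {
  world : Type;
  rel : agent -> world -> world -> Prop;
  val : nat -> world -> Prop;
  world_nonempty : inhabited world;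
  rel_refl : forall i x, rel i x x;
  rel_sym : forall i x y, rel i x y -> rel i y x;
  rel_trans : forall i x y z, rel i x y -> rel i y z -> rel i x z
}.

(* Truth in the submodel of M with domain D (D is the set of surviving
   worlds after successive announcements). *)
Fixpoint sat_el (M : model) (D : world M -> Prop) (w : world M) (f : elform)
  : Prop :=
  match f with
  | ELVar p => val M p w
  | ELNeg g => ~ sat_el M D w g
  | ELAnd g h => sat_el M D w g /\ sat_el M D w h
  | ELK i g => forall v, D v -> rel M i w v -> sat_el M D v g
  end.

Definition elTop : elform := ELNeg (ELAnd (ELVar 0) (ELNeg (ELVar 0))).

Fixpoint bigconjK (l : list agent) (f : agent -> elform) : elform :=
  match l with
  | [] => elTop
  | [i] => ELK i (f i)
  | i :: l' => ELAnd (ELK i (f i)) (bigconjK l' f)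
  end.

Definition psiG (G : coalition) (f : agent -> elform) : elform :=
  bigconjK (filter G agents) f.
Definition chiCoG (G : coalition) (g : agent -> elform) : elform :=
  bigconjK (filter (fun i => negb (G i)) agents) g.

Fixpoint sat (M : model) (D : world M -> Prop) (w : world M) (f : form)
  : Prop :=
  match f with
  | Var p => val M p w
  | Neg g => ~ sat M D w g
  | And g h => sat M D w g /\ sat M D w h
  | K i g => forall v, D v -> rel M i w v -> sat M D v g
  | Ann g h => sat M D w g -> sat M (fun v => D v /\ sat M D v g) w h
  | GA G g =>
      forall fs : agent -> elform,
      exists gs : agent -> elform,
        (* (M,w) |= psi_G -> <psi_G /\ chi_{A\G}> g *)
        sat_el M D w (psiG G fs) ->
        ~ (sat_el M D w (ELAnd (psiG G fs) (chiCoG G gs)) ->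
           ~ sat M (fun v => D v /\ sat_el M D v (ELAnd (psiG G fs) (chiCoG G gs)))
                 w g)
  end.

Definition models (M : model) (w : world M) (f : form) : Prop :=
  sat M (fun _ => True) w f.

Definition DGA (G : coalition) (f : form) : form := Neg (GA G (Neg f)).

Definition G_ab : coalition := fun i => match i with ag_c => false | _ => true end.
Definition G_a : coalition := fun i => match i with ag_a => true | _ => false end.
Definition G_b : coalition := fun i => match i with ag_b => true | _ => false end.

Definition pqr : form := And (Var pvar_p) (And (Var pvar_q) (Var pvar_r)).
Definition phi7 : form :=
  And (K ag_b pqr) (And (Neg (K ag_a pqr)) (Neg (K ag_c pqr))).

From Stdlib Require Import List.

(* Acting together, a and b announce "a knows q": this deletes p¬qr, the only
   world b confuses with the actual world pqr, while the worlds ¬pqr and pq¬r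
   survive whatever c adds, because c cannot tell them from pqr.  So afterwards
   b knows pqr and neither a nor c does.  Acting one after the other, a moves
   first and the opposing coalition {b,c} answers with "b knows p", deleting
   ¬pqr, the only world a confuses with pqr.  Announcements only shrink the
   model, so a knows pqr from then on, whatever b announces next. *)

Section Semantics.

Variable M : model.

Definition announce (D : world M -> Prop) (f : elform) : world M -> Prop :=
  fun v => D v /\ sat_el M D v f.

Lemma sat_el_elTop D w : sat_el M D w elTop.
Proof. simpl; tauto. Qed.

Lemma sat_el_K_elTop D w i : sat_el M D w (ELK i elTop).
Proof. intros v _ _; apply sat_el_elTop. Qed.

Lemma sat_el_bigconjK D w l f :
  sat_el M D w (bigconjK l f) <-> (forall i, In i l -> sat_el M D w (ELK i (f i))).
Proof.
  induction l as [|i [|j l] IHl].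
  - split; [intros _ i [] | intros _; apply sat_el_elTop].
  - split; [intros H k [<-|[]]; exact H | intros H; apply H; left; reflexivity].
  - change (sat_el M D w (ELK i (f i)) /\ sat_el M D w (bigconjK (j :: l) f) <->
            forall k, In k (i :: j :: l) -> sat_el M D w (ELK k (f k))).
    rewrite IHl; split.
    + intros [Hi Hl] k [<-|Hk]; [exact Hi | exact (Hl k Hk)].
    + intros H; split; [apply H; left; reflexivity | intros k Hk; apply H; right; exact Hk].
Qed.

Lemma In_agents i : In i agents.
Proof. destruct i; simpl; tauto. Qed.

Lemma sat_el_psiG D w G f :
  sat_el M D w (psiG G f) <-> (forall i, G i = true -> sat_el M D w (ELK i (f i))).
Proof.
  unfold psiG; rewrite sat_el_bigconjK.
  split; intros H i Hi; apply H; [apply filter_In; split; [apply In_agents | exact Hi] |].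
  apply filter_In in Hi; tauto.
Qed.

Lemma sat_el_chiCoG D w G g :
  sat_el M D w (chiCoG G g) <-> (forall i, G i = false -> sat_el M D w (ELK i (g i))).
Proof.
  unfold chiCoG; rewrite sat_el_bigconjK.
  split; intros H i Hi; apply H.
  - apply filter_In; split; [apply In_agents | rewrite Hi; reflexivity].
  - apply filter_In in Hi; destruct Hi as [_ Hi]; destruct (G i); [discriminate | reflexivity].
Qed.

Lemma sat_el_K_rel D i f u v :
  rel M i u v -> sat_el M D u (ELK i f) -> sat_el M D v (ELK i f).
Proof. intros Huv Hu x Dx Hvx; apply Hu; [exact Dx | exact (rel_trans M i u v x Huv Hvx)]. Qed.

Lemma sat_DGA_intro D w G f :
  (exists fs, sat_el M D w (psiG G fs) /\
     forall gs, sat_el M D w (chiCoG G gs) ->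
       sat M (announce D (ELAnd (psiG G fs) (chiCoG G gs))) w f) ->
  sat M D w (DGA G f).
Proof.
  intros [fs [Hpsi Hf]] H; destruct (H fs) as [gs Hgs].
  apply Hgs; [exact Hpsi |].
  intros [_ Hchi] Hnf; exact (Hnf (Hf gs Hchi)).
Qed.

Lemma not_sat_DGA D w G f :
  (forall fs, exists gs, sat_el M D w (psiG G fs) ->
     sat_el M D w (chiCoG G gs) /\
     ~ sat M (announce D (ELAnd (psiG G fs) (chiCoG G gs))) w f) ->
  ~ sat M D w (DGA G f).
Proof.
  intros H Hdga; apply Hdga; intros fs.
  destruct (H fs) as [gs Hgs]; exists gs; intros Hpsi Himp.
  destruct (Hgs Hpsi) as [Hchi Hnf]; exact (Himp (conj Hpsi Hchi) Hnf).
Qed.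

End Semantics.

Section PartitionModel.

Variables (W C : Type) (cell : agent -> W -> C) (holds : nat -> W -> Prop) (w0 : W).

Definition partition_model : model.
Proof.
  refine {| world := W; rel := fun i u v => cell i u = cell i v;
            val := holds; world_nonempty := inhabits w0 |}.
  - reflexivity.
  - intros i x y; apply eq_sym.
  - intros i x y z; apply eq_trans.
Defined.

End PartitionModel.

Inductive state : Type := s_pqr | s_pqnr | s_npqr | s_pnqr.

Definition cell (i : agent) (s : state) : state :=
  match i, s with
  | ag_a, s_npqr => s_pqr
  | ag_b, s_pnqr => s_pqr
  | ag_c, (s_pqnr | s_npqr) => s_pqr
  | _, _ => s
  end.

Definition holds (n : nat) (s : state) : Prop :=
  match n, s with
  | 0, s_npqr | 1, s_pnqr | 2, s_pqnr => False
  | 0, _ | 1, _ | 2, _ => True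
  | _, _ => False
  end.

Definition M7 : model := partition_model state state cell holds s_pqr.

Definition full : world M7 -> Prop := fun _ => True.

Definition a_knows_q : agent -> elform :=
  fun i => match i with ag_a => ELVar pvar_q | _ => elTop end.

Definition b_knows_p : agent -> elform :=
  fun i => match i with ag_b => ELVar pvar_p | _ => elTop end.

Lemma phi7_at_pqr (D : world M7 -> Prop) :
  D s_pqnr -> D s_npqr -> ~ D s_pnqr -> sat M7 D s_pqr phi7.
Proof.
  intros Hpqnr Hnpqr Hpnqr; split; [|split].
  - intros [] Dv Hr; simpl in *; try discriminate; tauto.
  - intros Ka; exact (proj1 (Ka s_npqr Hnpqr eq_refl)).
  - intros Kc; exact (proj2 (proj2 (Kc s_pqnr Hpqnr eq_refl))).
Qed.

Lemma phi7_fails_at_pqr (D : world M7 -> Prop) :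
  ~ D s_npqr -> ~ sat M7 D s_pqr phi7.
Proof.
  intros Hnpqr [_ [Ka _]]; apply Ka.
  intros [] Dv Hr; simpl in *; try discriminate; tauto.
Qed.

Lemma sat_psiG_ab_a_knows_q s :
  s <> s_pnqr -> sat_el M7 full s (psiG G_ab a_knows_q).
Proof.
  intros Hs; apply sat_el_psiG; intros [] Hi; try discriminate; [|apply sat_el_K_elTop].
  intros [] _ Hr; destruct s; simpl in *; try discriminate; tauto.
Qed.

Lemma not_sat_psiG_ab_a_knows_q : ~ sat_el M7 full s_pnqr (psiG G_ab a_knows_q).
Proof.
  rewrite sat_el_psiG; intros H.
  exact (H ag_a eq_refl s_pnqr I eq_refl).
Qed.

Lemma sat_chiCoG_ab_spread gs s :
  cell ag_c s = s_pqr ->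
  sat_el M7 full s_pqr (chiCoG G_ab gs) -> sat_el M7 full s (chiCoG G_ab gs).
Proof.
  intros Hs; rewrite !sat_el_chiCoG; intros H [] Hi; try discriminate.
  apply (sat_el_K_rel M7 full ag_c _ s_pqr); [exact (eq_sym Hs) | exact (H ag_c eq_refl)].
Qed.

Lemma phi7_after_ab_announcement gs :
  sat_el M7 full s_pqr (chiCoG G_ab gs) ->
  sat M7 (announce M7 full (ELAnd (psiG G_ab a_knows_q) (chiCoG G_ab gs))) s_pqr phi7.
Proof.
  intros Hchi; apply phi7_at_pqr.
  1,2: split; [exact I | split; [apply sat_psiG_ab_a_knows_q; discriminate |]];
       apply sat_chiCoG_ab_spread; [reflexivity | exact Hchi].
  intros [_ [Hpsi _]]; exact (not_sat_psiG_ab_a_knows_q Hpsi).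
Qed.

Lemma sat_chiCoG_a_b_knows_p : sat_el M7 full s_pqr (chiCoG G_a b_knows_p).
Proof.
  apply sat_el_chiCoG; intros [] Hi; try discriminate; [|apply sat_el_K_elTop].
  intros [] _ Hr; simpl in *; try discriminate; tauto.
Qed.

Lemma not_sat_chiCoG_a_b_knows_p : ~ sat_el M7 full s_npqr (chiCoG G_a b_knows_p).
Proof.
  rewrite sat_el_chiCoG; intros H.
  exact (H ag_b eq_refl s_npqr I eq_refl).
Qed.

Theorem mainTheorem7 :
  exists (M : model) (w : world M),
    models M w (DGA G_ab phi7) /\
    ~ models M w (DGA G_a (DGA G_b phi7)).
Proof.
  exists M7, s_pqr; split.
  - apply sat_DGA_intro; exists a_knows_q; split.
    + apply sat_psiG_ab_a_knows_q; discriminate.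
    + exact phi7_after_ab_announcement.
  - apply not_sat_DGA; intros fs; exists b_knows_p; intros _.
    split; [exact sat_chiCoG_a_b_knows_p |].
    apply not_sat_DGA; intros fs'; exists (fun _ => elTop); intros _.
    split; [apply sat_el_chiCoG; intros i _; apply sat_el_K_elTop |].
    apply phi7_fails_at_pqr; intros [[_ [_ Hchi]] _].
    exact (not_sat_chiCoG_a_b_knows_p Hchi).
Qed.
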